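(* The flow-cut gap for Minimum Cooperative Cut can be as large as $n-1$: for every $n\ge 2$ there is a directed graph on $n$ nodes with terminals $s,t$ and a normalized, monotone nondecreasing submodular $f$ on its edges such that $f(C^* )/\nu^*=n-1$, where $C^*$ is an $f$-minimal $(s,t)$-cut and $\nu^*$ is the optimal value of the Maximum Cooperative Flow problem.
   Context: An $(s,t)$-cut is a set of edges whose removal disconnects all $s$-$t$ paths; $C^*$ minimizes $f$ over $(s,t)$-cuts. The Maximum Cooperative Flow problem is: maximize $\nu$ over $\nu\in\mathbb{R}$, $\varphi\in\mathbb{R}^{\mathcal{E}}$ subject to $\varphi\ge0$; $\sum_{e\in A}\varphi(e)\le f(A)$ for all $A\subseteq\mathcal{E}$; and $\sum_{e\in\delta^+(u)}\varphi(e)-\sum_{e\in\delta^-(u)}\varphi(e)=d(u)\nu$ for all nodes $u$, where $d(s)=1$, $d(t)=-1$, $d(u)=0$ otherwise. The flow-cut gap is the ratio $f(C^* )/\nu^*$. *)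

From HB Require Import structures.
From mathcomp Require Import all_boot all_order all_algebra.
From mathcomp Require Import reals.
Set Implicit Arguments. Unset Strict Implicit. Unset Printing Implicit Defensive.
Import Order.TTheory GRing.Theory Num.Theory.
Local Open Scope ring_scope.

(* A (simple, loopless) directed graph on the node set 'I_n is given by an
   irreflexive adjacency relation adj; its edges are the pairs (u,v) with adj u v. *)
Definition edge (n : nat) (adj : rel 'I_n) : finType :=
  {e : 'I_n * 'I_n | adj e.1 e.2}.

Definition etail n (adj : rel 'I_n) (e : edge adj) : 'I_n := (val e).1.
Definition ehead n (adj : rel 'I_n) (e : edge adj) : 'I_n := (val e).2.

Definition is_st_path n (adj : rel 'I_n) (s t : 'I_n) (p : seq (edge adj)) : bool :=
  match p with
  | [::] => false
  | e0 :: p' =>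
      [&& etail e0 == s,
          path (fun e1 e2 => ehead e1 == etail e2) e0 p',
          ehead (last e0 p') == t &
          uniq (s :: map (@ehead n adj) p)]
  end.

Definition is_st_cut n (adj : rel 'I_n) (s t : 'I_n) (C : {set edge adj}) : Prop :=
  forall p, is_st_path s t p -> has (fun e => e \in C) p.

Section SetFun.
Variables (R : realFieldType) (T : finType) (f : {set T} -> R).
Definition normalized : Prop := f set0 = 0.
Definition monotone : Prop := forall A B : {set T}, A \subset B -> f A <= f B.
Definition submodular : Prop :=
  forall A B : {set T}, f (A :|: B) + f (A :&: B) <= f A + f B.
End SetFun.

Definition min_coop_cut (R : realFieldType) n (adj : rel 'I_n) (s t : 'I_n)
  (f : {set edge adj} -> R) (C : {set edge adj}) : Prop :=
  is_st_cut s t C /\ forall C', is_st_cut s t C' -> f C <= f C'.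

Definition demand (R : realFieldType) n (s t u : 'I_n) : R :=
  if u == s then 1 else if u == t then -1 else 0.

Definition coop_flow_feasible (R : realFieldType) n (adj : rel 'I_n) (s t : 'I_n)
  (f : {set edge adj} -> R) (nu : R) (phi : {ffun edge adj -> R}) : Prop :=
  [/\ forall e, 0 <= phi e,
      forall A : {set edge adj}, \sum_(e in A) phi e <= f A &
      forall u : 'I_n,
        \sum_(e | etail e == u) phi e - \sum_(e | ehead e == u) phi e
          = demand R s t u * nu].

Definition max_coop_flow_value (R : realFieldType) n (adj : rel 'I_n) (s t : 'I_n)
  (f : {set edge adj} -> R) (nu : R) : Prop :=
  (exists phi, coop_flow_feasible s t f nu phi) /\
  (forall nu' phi', coop_flow_feasible s t f nu' phi' -> nu' <= nu).

From HB Require Import structures.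
From mathcomp Require Import all_boot all_order all_algebra.
From mathcomp Require Import reals.
Set Implicit Arguments. Unset Strict Implicit. Unset Printing Implicit Defensive.
Import Order.TTheory GRing.Theory Num.Theory.
Local Open Scope ring_scope.

(* Take the directed path 0 -> 1 -> ... -> n-1 with s = 0, t = n-1, and let
   f A be 1 if A is nonempty and 0 otherwise.  Every (s,t)-cut meets the
   unique s-t path, so the minimum cut value is 1.  Weighting the conservation
   equation at node u by u shows that a flow of value nu has total mass
   (n-1) nu over the n-1 edges; the capacity constraint for the full edge set
   then gives nu <= 1/(n-1), and the uniform flow 1/(n-1) attains this bound. *)

Lemma path_map_iota (T : Type) (e : rel T) (f : nat -> T) k len :
  (forall i, (k <= i < k + len)%N -> e (f i) (f i.+1)) ->
  path e (f k) [seq f i | i <- iota k.+1 len].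
Proof.
elim: len k => [|len IHlen] k chain //=.
rewrite chain ?leqnn ?addnS ?ltnS ?leq_addr //= IHlen // => i /andP[ki ilen].
by apply: chain; rewrite ltnW //= -addSnnS.
Qed.

Lemma big_setT (V : Type) (idx : V) (op : Monoid.com_law idx) (T : finType)
    (F : T -> V) :
  \big[op/idx]_(x in [set: T]) F x = \big[op/idx]_x F x.
Proof. by apply: eq_bigl => x; rewrite in_setT. Qed.

Lemma last_iota k len : last k (iota k.+1 len) = (k + len)%N.
Proof. by elim: len k => [|len IHlen] k /=; rewrite ?addn0 // IHlen addSnnS. Qed.

Section NonemptyIndicator.
Variables (R : realFieldType) (T : finType).

Definition nonempty_indicator (A : {set T}) : R := (A != set0)%:R.

Lemma nonempty_indicator_normalized : normalized nonempty_indicator.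
Proof. by rewrite /normalized /nonempty_indicator eqxx. Qed.

Lemma nonempty_indicator_monotone : monotone nonempty_indicator.
Proof.
move=> A B sAB; rewrite /nonempty_indicator.
case: (eqVneq A set0) => [_|/set0Pn[x Ax]]; first by rewrite ler0n.
by have /set0Pn-> : exists x, x \in B by exists x; apply: (subsetP sAB).
Qed.

Lemma nonempty_indicator_submodular : submodular nonempty_indicator.
Proof.
move=> A B; rewrite /nonempty_indicator setU_eq0.
case: (eqVneq A set0) => [->|nzA]; first by rewrite set0I eqxx /= addr0 add0r.
case: (eqVneq B set0) => [->|nzB]; first by rewrite setI0 eqxx /= !addr0.
by rewrite /= lerD2l lern1 leq_b1.
Qed.

Lemma nonempty_indicator_mem (A : {set T}) x : x \in A -> nonempty_indicator A = 1.
Proof.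
move=> Ax; rewrite /nonempty_indicator.
by have /set0Pn-> : exists x, x \in A by exists x.
Qed.

End NonemptyIndicator.

Section FlowPotential.
Variables (R : realFieldType) (n : nat) (adj : rel 'I_n).

Definition net_outflow (phi : {ffun edge adj -> R}) (u : 'I_n) : R :=
  \sum_(e | etail e == u) phi e - \sum_(e | ehead e == u) phi e.

Lemma sum_over_endpoint (g : edge adj -> 'I_n) (F : edge adj -> R) :
  \sum_u \sum_(e | g e == u) F e = \sum_e F e.
Proof. by rewrite [RHS](partition_big g xpredT). Qed.

Lemma sum_potential_net_outflow (pot : 'I_n -> R) phi :
  \sum_u pot u * net_outflow phi u =
  \sum_e phi e * (pot (etail e) - pot (ehead e)).
Proof.
have weigh g u : pot u * \sum_(e | g e == u) phi e =
                 \sum_(e | g e == u) pot (g e) * phi e.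
  by rewrite big_distrr; apply: eq_bigr => e /eqP->.
under eq_bigr do rewrite /net_outflow mulrBr !weigh.
rewrite sumrB !sum_over_endpoint -sumrB.
by apply: eq_bigr => e _; rewrite mulrBr !(mulrC (phi e)).
Qed.

Lemma sum_potential_demand (pot : 'I_n -> R) (s t : 'I_n) nu : s != t ->
  \sum_u pot u * (demand R s t u * nu) = (pot s - pot t) * nu.
Proof.
move=> st; have dt : demand R s t t = -1 by rewrite /demand eq_sym (negbTE st) eqxx.
rewrite (bigD1 s) // (bigD1 t) 1?eq_sym //= big1 => [|u /andP[ut us]].
  by rewrite dt /demand eqxx addr0 mul1r mulN1r mulrN mulrBl.
by rewrite /demand (negbTE us) (negbTE ut) mul0r mulr0.
Qed.

Lemma flow_value_potential (pot : 'I_n -> R) (s t : 'I_n) nu phi : s != t ->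
  (forall u, net_outflow phi u = demand R s t u * nu) ->
  \sum_e phi e * (pot (etail e) - pot (ehead e)) = (pot s - pot t) * nu.
Proof.
move=> st conservation.
by rewrite -sum_potential_net_outflow -(sum_potential_demand pot nu st);
   apply: eq_bigr => u _; rewrite conservation.
Qed.

End FlowPotential.

Section DirectedPath.
Variable m : nat.

Definition path_adj : rel 'I_m.+2 := fun u v => val v == (val u).+1.

Lemma path_adj_irreflexive : irreflexive path_adj.
Proof. by move=> u; rewrite /path_adj /= eqn_leq ltnn andbF. Qed.

Definition path_edge (k : 'I_m.+1) : edge path_adj :=
  exist (fun e => path_adj e.1 e.2) (widen_ord (leqnSn _) k, lift ord0 k) (eqxx _).

Lemma ehead_path_adj (e : edge path_adj) : val (ehead e) = (val (etail e)).+1.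
Proof. by case: e => [[u v] uv]; exact: (eqP uv). Qed.

Lemma etail_path_adj_lt (e : edge path_adj) : (val (etail e) < m.+1)%N.
Proof. by have := ltn_ord (ehead e); rewrite ehead_path_adj. Qed.

Lemma etail_path_adj_inj : injective (@etail _ path_adj).
Proof.
move=> e e' ee'; have hh : ehead e = ehead e'.
  by apply: val_inj; rewrite !ehead_path_adj ee'.
apply: val_inj.
by rewrite [val e]surjective_pairing [val e']surjective_pairing; congr pair.
Qed.

Lemma sum_path_etail (V : nmodType) (c : V) (u : 'I_m.+2) :
  \sum_(e : edge path_adj | etail e == u) c = if (val u < m.+1)%N then c else 0.
Proof.
case: ltnP => [um|mu].
  rewrite (big_pred1 (path_edge (Ordinal um))) // => e /=.
  by rewrite -(inj_eq etail_path_adj_inj) -val_eqE.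
rewrite big_pred0 // => e; apply/negbTE; apply: contraTneq mu => <-.
by rewrite -ltnNge etail_path_adj_lt.
Qed.

Lemma sum_path_ehead (V : nmodType) (c : V) (u : 'I_m.+2) :
  \sum_(e : edge path_adj | ehead e == u) c = if (0 < val u)%N then c else 0.
Proof.
case: posnP => [u0|u_gt0].
  rewrite big_pred0 // => e; apply/negbTE; apply: contra_eqN u0 => /eqP <-.
  by rewrite ehead_path_adj.
have um : ((val u).-1 < m.+1)%N by move: (valP u) u_gt0; case: (val u).
rewrite (big_pred1 (path_edge (Ordinal um))) // => e /=.
rewrite -(inj_eq etail_path_adj_inj) -!val_eqE /= ehead_path_adj.
by rewrite -{1}(prednK u_gt0) eqSS.
Qed.

Lemma path_flow_mass (R : realFieldType) nu (phi : {ffun edge path_adj -> R}) :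
  (forall u, net_outflow phi u = demand R ord0 ord_max u * nu) ->
  \sum_e phi e = (m.+1)%:R * nu.
Proof.
move=> conservation.
have st : ord0 != ord_max :> 'I_m.+2 by [].
have := flow_value_potential (fun u => (val u)%:R) st conservation.
rewrite /= sub0r mulNr => /eqP; rewrite eq_sym eqr_oppLR => /eqP ->.
rewrite -sumrN; apply: eq_bigr => e _.
by rewrite ehead_path_adj -natr1 opprD addrA subrr sub0r mulrN1 opprK.
Qed.

Definition uniform_flow (R : realFieldType) (c : R) : {ffun edge path_adj -> R} :=
  [ffun=> c].

Lemma uniform_flow_conservation (R : realFieldType) (c : R) u :
  net_outflow (uniform_flow c) u = demand R ord0 ord_max u * c.
Proof.
rewrite /net_outflow /uniform_flow.
under eq_bigr do rewrite ffunE.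
under [X in _ - X]eq_bigr do rewrite ffunE.
rewrite sum_path_etail sum_path_ehead /demand.
case: (eqVneq u ord0) => [->|u_neq0]; first by rewrite mul1r subr0.
case: (eqVneq u ord_max) => [->|u_neqmax]; first by rewrite ltnn sub0r mulN1r.
have u_gt0 : (0 < val u)%N by rewrite lt0n; exact: u_neq0.
have u_ltmax : (val u < m.+1)%N.
  by rewrite ltn_neqAle -ltnS ltn_ord andbT; exact: u_neqmax.
by rewrite u_gt0 u_ltmax mul0r subrr.
Qed.

Definition path_edges : seq (edge path_adj) :=
  [seq path_edge (inord k) | k <- iota 0 m.+1].

Lemma etail_path_edge_inord k :
  (k < m.+1)%N -> val (etail (path_edge (inord k))) = k.
Proof. exact: inordK. Qed.

Lemma ehead_path_edge_inord k :
  (k < m.+1)%N -> val (ehead (path_edge (inord k))) = k.+1.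
Proof. by move=> km; rewrite ehead_path_adj etail_path_edge_inord. Qed.

Lemma path_edges_st_path : is_st_path ord0 ord_max path_edges.
Proof.
have heads : map val (map (@ehead _ path_adj) path_edges) = iota 1 m.+1.
  rewrite -!map_comp -[iota 1 _]/(iota (1 + 0) _) iotaDl; apply/eq_in_map => k.
  by rewrite mem_iota => /andP[_ km]; exact: ehead_path_edge_inord.
have uniq_heads : uniq (ord0 :: map (@ehead _ path_adj) path_edges).
  by rewrite -(map_inj_uniq val_inj) map_cons heads (iota_uniq 0 m.+2).
move: uniq_heads; rewrite /path_edges /= => uniq_heads; apply/and4P; split=> //.
- by apply/eqP/val_inj; rewrite etail_path_edge_inord.
- apply: path_map_iota => i /andP[_ im]; apply/eqP/val_inj.
  by rewrite ehead_path_edge_inord ?etail_path_edge_inord // ltnW.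
apply/eqP/val_inj.
by rewrite (last_map (fun k => path_edge (inord k))) last_iota ehead_path_edge_inord.
Qed.

End DirectedPath.

Section PathOptima.
Variables (R : realFieldType) (m : nat).

Local Notation f := (@nonempty_indicator R (edge (@path_adj m))).

Lemma nonempty_indicator_setT : f setT = 1.
Proof. exact: (nonempty_indicator_mem R (in_setT (path_edge ord0))). Qed.

Lemma path_min_coop_cut : min_coop_cut ord0 ord_max f setT.
Proof.
split=> [[|e p] //= _|C cutC]; first by rewrite in_setT.
have /hasP[e _ eC] := cutC _ (path_edges_st_path m).
by rewrite nonempty_indicator_setT (nonempty_indicator_mem R eC).
Qed.

Lemma uniform_flow_feasible :
  coop_flow_feasible ord0 ord_max f (m.+1%:R)^-1 (uniform_flow m (m.+1%:R)^-1).
Proof.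
have mass := path_flow_mass (@uniform_flow_conservation m R (m.+1%:R)^-1).
split=> [e|A|u]; last exact: uniform_flow_conservation.
  by rewrite ffunE invr_ge0 ler0n.
rewrite /nonempty_indicator; case: eqP => [->|_]; first by rewrite big_set0.
rewrite mulfV ?pnatr_eq0 // in mass.
apply: (le_trans _ (_ : \sum_e uniform_flow m (m.+1%:R)^-1 e <= _)); last first.
  by rewrite mass.
rewrite [X in _ <= X](bigID (mem A)) /= lerDl.
by apply: sumr_ge0 => e _; rewrite ffunE invr_ge0 ler0n.
Qed.

Lemma path_max_coop_flow : max_coop_flow_value ord0 ord_max f (m.+1%:R)^-1.
Proof.
split=> [|nu phi [_ capacity conservation]].
  by exists (uniform_flow m (m.+1%:R)^-1); exact: uniform_flow_feasible.
have := capacity setT.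
rewrite nonempty_indicator_setT big_setT (path_flow_mass conservation).
by rewrite -(mulr1 (m.+1%:R)^-1) ler_pdivlMl ?ltr0Sn.
Qed.

End PathOptima.

Theorem corollary1 (R : realType) (n : nat) (hn : (2 <= n)%N) :
  exists (adj : rel 'I_n) (s t : 'I_n),
    irreflexive adj /\ s != t /\
    exists f : {set edge adj} -> R,
      [/\ normalized f, monotone f, submodular f &
          exists (Cstar : {set edge adj}) (nustar : R),
            [/\ min_coop_cut s t f Cstar,
                max_coop_flow_value s t f nustar &
                f Cstar / nustar = (n - 1)%:R]].
Proof.
case: n hn => [|[|m]] // _.
exists (@path_adj m), ord0, ord_max; split; first exact: path_adj_irreflexive.
split=> //; exists (@nonempty_indicator R _); split.
- exact: nonempty_indicator_normalized.
- exact: nonempty_indicator_monotone.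
- exact: nonempty_indicator_submodular.
exists setT, (m.+1%:R)^-1; split.
- exact: path_min_coop_cut.
- exact: path_max_coop_flow.
by rewrite nonempty_indicator_setT div1r invrK subn1.
Qed.
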